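(* Let $a\geqslant 1$ and let $\Omega$ be a subset of $\mathbb{Z}_{2a}$ such that for every $g\in\Omega$ one has $|g|>2$ and $-g\in\Omega$. Let $\Psi$ be an abelian group of order $2^\alpha$ with $\alpha\geqslant 2$. Then there exists a set $\mathcal{T}$ of $|\Omega|/2$ zero-sum arrays of size $2\times 2^\alpha$ with entries in $\mathbb{Z}_{2a}\oplus\Psi$ such that the list of all entries of the arrays of $\mathcal{T}$ (counted with multiplicity) is exactly $\{(x,y): x\in\Omega,\ y\in\Psi\}$, each element appearing once.
   Context: $|g|$ denotes the order of $g$. An array with entries in an abelian group is zero-sum if the sum of the entries in each row and in each column equals $0$. *)

From HB Require Import structures.
From mathcomp Require Import all_boot all_order all_algebra all_fingroup.
Set Implicit Arguments. Unset Strict Implicit. Unset Printing Implicit Defensive.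
Import GRing.Theory.
Local Open Scope ring_scope.

Definition zero_sum_array (G : zmodType) (m n : nat) (A : 'M[G]_(m, n)) : Prop :=
  (forall i : 'I_m, \sum_(j < n) A i j = 0) /\
  (forall j : 'I_n, \sum_(i < m) A i j = 0).

Definition mx_entries (T : Type) (m n : nat) (A : 'M[T]_(m, n)) : seq T :=
  [seq A i j | i <- enum 'I_m, j <- enum 'I_n].

(* Pair each g in Omega with -g, which is distinct from g since |g| > 2, and
   split Psi into a set A and its translate A + c by an element c of order 2;
   as 4 divides |Psi|, |A| is even, so A and A + c have the same sum.  For a
   representative g of each pair, the array whose first row lists (g, y) for
   y in A and (-g, -y) for y outside A, and whose second row is its negative,
   is zero-sum and has entries exactly ({g, -g} x Psi). *)

From HB Require Import structures.
From mathcomp Require Import all_boot all_order all_algebra all_fingroup.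
From mathcomp Require Import pgroup cyclic.
Set Implicit Arguments. Unset Strict Implicit. Unset Printing Implicit Defensive.
Import GRing.Theory.
Local Open Scope ring_scope.

Lemma involution_transversal (T : finType) (S : {set T}) (s : T -> T) :
  involutive s -> {in S, forall x, s x \in S /\ s x != x} ->
  exists2 R : {set T}, R \subset S & S :\: R = s @: R.
Proof.
move=> sK sS; pose R := [set x in S | (enum_rank x < enum_rank (s x))%N].
exists R; first by apply/subsetP => x; rewrite inE => /andP[].
apply/setP => x; rewrite (can2_imset_pre _ sK sK) !inE sK.
have [Sx|notSx] := boolP (x \in S); last first.
  by case: (boolP (s x \in S)) => // /sS[]; rewrite sK (negPf notSx).
have [-> sx_neq_x] := sS x Sx.
by rewrite /= andbT -leqNgt leq_eqVlt val_eqE (inj_eq enum_rank_inj) (negPf sx_neq_x).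
Qed.

Lemma card_involution_transversal (T : finType) (S R : {set T}) (s : T -> T) :
  involutive s -> R \subset S -> S :\: R = s @: R -> #|S| = (2 * #|R|)%N.
Proof.
move=> sK RS SR; rewrite -(cardsID R S) SR card_imset; last exact: can_inj sK.
by rewrite (setIidPr RS) mul2n addnn.
Qed.

Lemma oppr_neq_of_order_gt2 (G : finZmodType) (g : G) : (2 < #[g]%g)%N -> - g != g.
Proof.
rewrite ltnNge; apply: contra => /eqP gN; apply: order_inf.
by rewrite expgS expg1 -[X in (X * _)%g]gN; apply/eqP/addNr.
Qed.

Lemma exists_equal_sum_halves (Psi : finZmodType) : (4 %| #|Psi|)%N ->
  exists A : {set Psi}, #|~: A| = #|A| /\ \sum_(y in ~: A) y = \sum_(y in A) y.
Proof.
move=> four_dvd; have two_dvd : (2 %| #|[set: Psi]%G|)%N.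
  by rewrite cardsT (dvdn_trans _ four_dvd).
have [c _ c_order] := Cauchy (isT : prime 2) two_dvd.
have c2 : c + c = 0 by have := expg_order c; rewrite c_order.
have addcK : involutive (+%R^~ c) by move=> y /=; rewrite -addrA c2 addr0.
have [|A _ defA] := @involution_transversal _ [set: Psi] _ addcK.
  move=> y _; split; rewrite ?inE // -subr_eq0 addrAC subrr add0r.
  by apply/eqP => c0; move: c_order; rewrite c0 order1.
have cardA : #|Psi| = (2 * #|A|)%N.
  by rewrite -cardsT (card_involution_transversal addcK (subsetT A) defA).
rewrite setTD in defA; exists A.
split; first by rewrite defA card_imset //; apply: addIr.
rewrite defA big_imset /=; last by move=> x y _ _ /addIr.
rewrite big_split /= sumr_const; suff -> : c *+ #|A| = 0 by rewrite addr0.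
apply/eqP; rewrite -[c *+ _]/(c ^+ #|A|)%g -order_dvdn c_order.
by rewrite -(@dvdn_pmul2l 2) // -cardA.
Qed.

Lemma oppr_pair (U V : zmodType) (x : U) (y : V) : - (x, y) = (- x, - y) :> U * V.
Proof. by []. Qed.

Lemma mx_entriesP (T : eqType) m n (M : 'M[T]_(m, n)) z :
  reflect (exists i j, z = M i j) (z \in mx_entries M).
Proof.
apply: (iffP allpairsP) => [[[i j] /= [_ _ ->]] | [i [j ->]]]; first by exists i, j.
by exists (i, j); rewrite !mem_enum.
Qed.

Lemma size_mx_entries (T : Type) m n (M : 'M[T]_(m, n)) : size (mx_entries M) = (m * n)%N.
Proof. by rewrite size_allpairs !size_enum_ord. Qed.

Lemma size_flatten_mx_entries (T : Type) m n (Ms : seq 'M[T]_(m, n)) :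
  size (flatten [seq mx_entries M | M <- Ms]) = (size Ms * (m * n))%N.
Proof. by elim: Ms => //= M Ms IH; rewrite size_cat IH size_mx_entries mulSn. Qed.

Lemma perm_enum_of_mem_size (T : finType) (S : {set T}) (s : seq T) :
  s =i S -> size s = #|S| -> perm_eq s (enum S).
Proof.
move=> sS size_s; have enum_s : enum S =i s by move=> x; rewrite sS mem_enum.
have uniq_s : uniq s by rewrite (uniq_size_uniq (enum_uniq S) enum_s) size_s cardE.
by rewrite perm_sym uniq_perm ?enum_uniq.
Qed.

Section SignedArray.

Variables (Z : zmodType) (Psi : finZmodType) (A : {set Psi}).

Definition signed_entry (g : Z) (y : Psi) : Z * Psi :=
  if y \in A then (g, y) else (- g, - y).

Definition signed_array n (h : 'I_n -> Psi) (g : Z) : 'M[Z * Psi]_(2, n) :=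
  \matrix_(i, j) (if i == ord0 then signed_entry g (h j) else - signed_entry g (h j)).

Lemma sum_signed (V : zmodType) (u : Psi -> V) :
  \sum_y (if y \in A then u y else - u y) = \sum_(y in A) u y - \sum_(y in ~: A) u y.
Proof.
rewrite (bigID [in A]) /= -sumrN; congr (_ + _); apply: eq_big => y //.
- by move=> ->.
- by rewrite inE.
- by move=> /negPf->.
Qed.

Lemma sum_signed_entry g :
  #|~: A| = #|A| -> \sum_(y in ~: A) y = \sum_(y in A) y ->
  \sum_y signed_entry g y = 0.
Proof.
move=> cardAC sumAC; rewrite [LHS]surjective_pairing !raddf_sum /=.
rewrite (eq_bigr _ (fun y _ => fun_if fst _ _ _)) (eq_bigr _ (fun y _ => fun_if snd _ _ _)).
by rewrite !sum_signed !sumr_const cardAC sumAC !subrr.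
Qed.

Lemma signed_array_zero_sum n (h : 'I_n -> Psi) g :
  bijective h -> #|~: A| = #|A| -> \sum_(y in ~: A) y = \sum_(y in A) y ->
  zero_sum_array (signed_array h g).
Proof.
move=> h_bij cardAC sumAC; split=> [i | j]; last first.
  by rewrite big_ord_recl big_ord1 !mxE subrr.
have row_sum : \sum_j signed_entry g (h j) = 0.
  by rewrite -(reindex h (P := xpredT)) ?sum_signed_entry //; exact: onW_bij.
under eq_bigr do rewrite mxE.
by case: (i == ord0); rewrite ?sumrN row_sum ?oppr0.
Qed.

Lemma mem_signed_array n (h : 'I_n -> Psi) g z : bijective h ->
  (z \in mx_entries (signed_array h g)) = (z.1 == g) || (z.1 == - g).
Proof.
move=> [h' hK h'K]; apply/mx_entriesP/idP => [[i [j ->]] | ].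
  by rewrite mxE /signed_entry; do 2 case: ifP => _; rewrite /= ?oppr_pair ?opprK eqxx ?orbT.
case: z => x y /orP[] /eqP /= ->.
  exists (if y \in A then ord0 else ord_max), (h' y).
  by rewrite mxE h'K /signed_entry; case: (y \in A); rewrite /= ?oppr_pair ?opprK.
exists (if - y \in A then ord_max else ord0), (h' (- y)).
by rewrite mxE h'K /signed_entry; case: (- y \in A); rewrite /= ?oppr_pair ?opprK.
Qed.

Lemma mem_signed_arrays n (h : 'I_n -> Psi) (R : seq Z) z : bijective h ->
  (z \in flatten [seq mx_entries M | M <- [seq signed_array h g | g <- R]])
  = (z.1 \in R) || (- z.1 \in R).
Proof.
move=> h_bij; rewrite -map_comp; apply/flatten_mapP/orP => [[g gR] | ].
  by rewrite /= mem_signed_array // => /orP[] /eqP->; rewrite ?opprK; [left | right].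
case=> [z1R | Nz1R]; [exists z.1 | exists (- z.1)] => //=.
  by rewrite mem_signed_array // eqxx.
by rewrite mem_signed_array // opprK eqxx orbT.
Qed.

End SignedArray.

Theorem lemma4p6 (a : nat) (Omega : {set 'Z_(2 * a)})
  (Psi : finZmodType) (alpha : nat) :
  (1 <= a)%N ->
  (forall g, g \in Omega -> (2 < #[g]%g)%N /\ (- g)%R \in Omega) ->
  #|Psi| = (2 ^ alpha)%N ->
  (2 <= alpha)%N ->
  exists T : seq 'M[('Z_(2 * a) * Psi)%type]_(2, 2 ^ alpha),
    size T = (#|Omega| %/ 2)%N /\
    (forall A, A \in T -> zero_sum_array A) /\
    perm_eq (flatten [seq mx_entries A | A <- T]) (enum (setX Omega [set: Psi])).
Proof.
(* The construction works in Z_n for any n. *)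
move=> _ Omega_ok cardPsi alpha_ge2.
have four_dvd : (4 %| #|Psi|)%N by rewrite cardPsi (dvdn_exp2l 2 alpha_ge2).
have [A [cardAC sumAC]] := exists_equal_sum_halves four_dvd.
have [h h_bij] : exists h : 'I_(2 ^ alpha) -> Psi, bijective h.
  exists (enum_val \o cast_ord (esym cardPsi)).
  by apply: bij_comp; [exact: enum_val_bij | exact: (Bijective (cast_ordK _) (cast_ordKV _))].
have negK : involutive (fun g : 'Z_(2 * a) => - g) := opprK.
have [R ROmega defR] : exists2 R : {set 'Z_(2 * a)}, R \subset Omega & Omega :\: R = -%R @: R.
  apply: involution_transversal negK _ => g /Omega_ok[g_order Ng].
  by split; last exact: oppr_neq_of_order_gt2.
have cardOmega := card_involution_transversal negK ROmega defR.
exists [seq signed_array A h g | g <- enum R]; split; [|split].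
- by rewrite size_map -cardE cardOmega mulKn.
- by move=> M /mapP[g _ ->]; exact: signed_array_zero_sum.
apply: perm_enum_of_mem_size => [[x y] | ].
  rewrite mem_signed_arrays // !mem_enum in_setX in_setT andbT /=.
  by rewrite -(setID Omega R) (setIidPr ROmega) defR !inE (can2_imset_pre _ negK negK) inE.
rewrite size_flatten_mx_entries size_map -cardE cardsX cardsT cardOmega cardPsi.
by rewrite mulnA [(#|R| * 2)%N]mulnC.
Qed.
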